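(* Fix an integer $k\ge2$, and let $\alpha=1+\frac{3}{2k}$, $\beta=\frac{1}{5k}$. Let $A\cup B$ be an instance of $(n,n^\alpha,n^\beta)$-Nice Set Cover (with $n^{1/k}$ an integer and every vertex of $B$ having a neighbor in $A$) with optimum $OPT_{NSC}$. Build a digraph $G$ with vertex layers $V_1,\dots,V_{k+2}$ as follows: $V_1\cup\dots\cup V_{k+1}$ is the generalized butterfly of width $n$ and diameter $k$, i.e. $V_i=[n^{1/k}]^k\times\{i\}$ for $i\in[k+1]$ and there is an edge from $(u,i)$ to $(v,i+1)$ iff $u_j=v_j$ for all $j\ne i$; the layer $V_{k+1}$ is identified (by an arbitrary bijection) with $A$; $V_{k+2}=B$; and each edge of the set-cover instance is directed from $A=V_{k+1}$ to $B=V_{k+2}$. Then $S_k(G)=\Theta(OPT_{NSC}\cdot n^{2/k})$, where the hidden constants depend only on $k$ (for $n$ sufficiently large).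
   Context: An $(a',b',c')$-Nice Set Cover instance is a bipartite graph with parts $A$, $B$, $|A|=a'$, $|B|=b'$, $B$ partitioned into blocks $B_1,\dots,B_{a'}$ of size $b'/a'$, such that any $v\in A$ adjacent to some vertex of $B_i$ is adjacent to all of $B_i$, and each $v\in A$ is adjacent to at most $c'$ blocks; $OPT_{NSC}$ is the minimum number of vertices of $A$ covering $B$. For a digraph $G$, a $k$-TC-spanner is a digraph $H$ on the same vertices whose edges lie in the transitive closure of $G$ such that $d_H(u,v)\le k$ whenever $v$ is reachable from $u$ in $G$; $S_k(G)$ is the minimum number of edges of a $k$-TC-spanner. *)

From HB Require Import structures.
From mathcomp Require Import all_boot all_order all_algebra.
Set Implicit Arguments. Unset Strict Implicit. Unset Printing Implicit Defensive.

(* Minimum of #|X| over the sets X : {set T} satisfying P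
   (default #|{set T}| if none, which never happens in our uses). *)
Definition min_card (T : finType) (P : pred {set T}) : nat :=
  \big[minn/#|{set T}|]_(X : {set T} | P X) #|X|.

Definition covers (A B : finType) (E : A -> B -> bool) (C : {set A}) : bool :=
  [forall b : B, [exists v in C, E v b]].

Definition opt_nsc (A B : finType) (E : A -> B -> bool) : nat :=
  min_card (covers E).

Definition nice_blocks (A B : finType) (E : A -> B -> bool) (I : finType)
  (blk : B -> I) : Prop :=
  forall v b b', E v b -> blk b = blk b' -> E v b'.

Definition nblocks (A B : finType) (E : A -> B -> bool) (I : finType)
  (blk : B -> I) (v : A) : nat :=
  #|[set blk b | b in [set b | E v b]]|.

Definition tc (V : finType) (e : rel V) : rel V :=
  fun u v => [exists w, e u w && connect e w v].

Fixpoint reach_le (V : finType) (h : rel V) (n : nat) (u v : V) : bool :=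
  match n with
  | 0 => u == v
  | n'.+1 => (u == v) || [exists w, h u w && reach_le h n' w v]
  end.

Definition edge_rel (V : finType) (H : {set V * V}) : rel V :=
  fun x y => (x, y) \in H.

Definition is_kTC_spanner (V : finType) (k : nat) (e : rel V)
  (H : {set V * V}) : bool :=
  [forall p in H, tc e p.1 p.2] &&
  [forall u, forall v, connect e u v ==> reach_le (edge_rel H) k u v].

Definition S_k (V : finType) (k : nat) (e : rel V) : nat :=
  min_card (is_kTC_spanner k e).

(* [m]^k, with m = n^{1/k} *)
Definition BV (k m : nat) : finType := {ffun 'I_k -> 'I_m}.

(* vertices: layers V_1..V_{k+1} (0-indexed by 'I_k.+1) of the butterfly,
   layer V_{k+1} (index k) being identified with A, and V_{k+2} = B *)
Definition gvert (k m : nat) (B : finType) : finType :=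
  (('I_k.+1 * BV k m) + B)%type.

Definition gedge (k m : nat) (A B : finType) (phi : BV k m -> A)
  (E : A -> B -> bool) : rel (gvert k m B) :=
  fun x y =>
    match x, y with
    | inl (i, u), inl (i', v) =>
        (nat_of_ord i' == (nat_of_ord i).+1) &&
        [forall j : 'I_k, (nat_of_ord j != nat_of_ord i) ==> (u j == v j)]
    | inl (i, u), inr b => (nat_of_ord i == k) && E (phi u) b
    | _, _ => false
    end.

(* A butterfly
   vertex of layer i reaches exactly the points that agree with it on the
   coordinates outside [i, j) of later layers j, and the vertices b adjacent to
   some y sharing its first i coordinates.

   Lower bound, m^2 OPT <= 3 |H| for every k-TC-spanner H: for a source u of the
   first layer, the H-paths of length <= k from u to B must jump over a layer
   somewhere; this yields a set cover C_u built from the edges of H whose tail is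
   reachable from u.  A vertex of layer i is reachable from at most m^i sources,
   so double counting gives sum_u |C_u| <= 3 |H| m^(k-2) and OPT <= |C_u| for
   each of the m^k sources.

   Upper bound: the edges of G together with shortcuts from layer k-2 to the
   vertices of an optimal cover C in layer k form a k-TC-spanner; counting its
   edges with the block size s (s^2 = m^3) and degree D (D^5 <= m) gives
   (k+2) OPT m^2. *)
From HB Require Import structures.
From mathcomp Require Import all_boot all_order all_algebra zify.
Set Implicit Arguments. Unset Strict Implicit. Unset Printing Implicit Defensive.

Lemma card_bigcup_le (I T : finType) (P : pred I) (F : I -> {set T}) :
  #|\bigcup_(i | P i) F i| <= \sum_(i | P i) #|F i|.
Proof.
elim/big_rec2: _ => [|i n U _ le_Un]; first by rewrite cards0.
by rewrite (leq_trans (leq_card_setU _ _).1) ?leq_add2l.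
Qed.

Lemma card_sum_bool (T : finType) (D : {pred T}) (P : pred T) :
  #|[set x in D | P x]| = \sum_(x in D) P x.
Proof.
rewrite -sum1_card big_mkcond [RHS]big_mkcond; apply: eq_bigr => x _.
by rewrite inE; case: (x \in D); case: (P x).
Qed.

Lemma card_preim_fibres (B I : finType) (blk : B -> I) (s : nat) (Q : {set I}) :
  (forall i, #|[set b | blk b == i]| = s) -> #|[set b | blk b \in Q]| = s * #|Q|.
Proof.
move=> fibre_s; rewrite -sum1_card (partition_big blk (mem Q)) => [|b]; last by rewrite inE.
rewrite mulnC -sum_nat_const; apply: eq_bigr => i Qi.
rewrite -(fibre_s i) -sum1_card; apply: eq_bigl => b.
by rewrite !inE; case: (blk b =P i) => [->|]; rewrite ?andbT ?andbF.
Qed.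

Lemma min_card_le (T : finType) (P : pred {set T}) (X : {set T}) :
  P X -> min_card P <= #|X|.
Proof.
move=> PX; rewrite /min_card.
have : X \in index_enum {set T} by rewrite mem_index_enum.
elim: (index_enum _) => [//|Y r IH]; rewrite inE big_cons.
case/orP=> [/eqP<-|Xr]; first by rewrite PX geq_minl.
by case: (P Y); [exact: leq_trans (geq_minr _ _) (IH Xr) | exact: IH].
Qed.

Lemma min_card_attained (T : finType) (P : pred {set T}) (X0 : {set T}) :
  P X0 -> exists2 X, P X & min_card P = #|X|.
Proof.
move=> PX0; have lt_min : min_card P < #|{set T}|.
  apply: leq_ltn_trans (min_card_le PX0) _; apply: leq_ltn_trans (max_card _) _.
  apply: leq_trans (ltn_expl _ (isT : 1 < 2)) _.
  by rewrite -cardsT -card_powerset max_card.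
have : (min_card P == #|{set T}|) || [exists X, P X && (min_card P == #|X|)].
  rewrite /min_card; elim/big_ind: _ => [|x y hx hy|X PX]; first by rewrite eqxx.
  - by case: (leqP x y).
  - by apply/orP; right; apply/existsP; exists X; rewrite PX eqxx.
case/orP=> [/eqP min_eq|/existsP[X /andP[PX /eqP]]]; last by exists X.
by rewrite min_eq ltnn in lt_min.
Qed.

Section NiceSetCover.
Variables (A B I : finType) (E : A -> B -> bool) (blk : B -> I) (s : nat).
Hypothesis blk_size : forall i, #|[set b | blk b == i]| = s.

(* The neighbourhood of a is contained in the nblocks blocks it meets. *)
Lemma card_nbhd a : #|[set b | E a b]| <= nblocks E blk a * s.
Proof.
rewrite /nblocks mulnC -(card_preim_fibres _ blk_size).
apply/subset_leq_card/subsetP => b Eab.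
by rewrite inE; apply: imset_f.
Qed.

Lemma card_adjacent_pairs (D : nat) :
  (forall a, nblocks E blk a <= D) -> #|[set q : A * B | E q.1 q.2]| <= #|A| * (D * s).
Proof.
move=> deg_D.
have -> : [set q : A * B | E q.1 q.2] = \bigcup_a (pair a @: [set b | E a b]).
  apply/setP => -[a b]; rewrite inE /=.
  apply/idP/bigcupP => [Eab|[a' _ /imsetP[b' + [-> ->]]]].
    by exists a => //; apply: imset_f; rewrite inE.
  by rewrite inE.
apply: leq_trans (card_bigcup_le _ _) _; rewrite -sum_nat_const; apply: leq_sum => a _.
rewrite (leq_trans (leq_imset_card _ _)) // (leq_trans (card_nbhd a)) //.
by rewrite leq_mul2r deg_D orbT.
Qed.

(* A cover C reaches every block, and each of its vertices meets at most D blocks. *)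
Lemma card_blocks_le_cover (C : {set A}) (D : nat) :
  0 < s -> covers E C -> (forall a, nblocks E blk a <= D) -> #|I| <= #|C| * D.
Proof.
move=> s_gt0 C_covers deg_D.
have sub : [set: I] \subset \bigcup_(c in C) (blk @: [set b | E c b]).
  apply/subsetP => i _; have : 0 < #|[set b | blk b == i]| by rewrite blk_size.
  case/card_gt0P => b; rewrite inE => /eqP <-.
  have [c Cc Ecb] := exists_inP (forallP C_covers b).
  by apply/bigcupP; exists c => //; apply: imset_f; rewrite inE.
rewrite -cardsT; apply: leq_trans (subset_leq_card sub) _.
apply: leq_trans (card_bigcup_le _ _) _.
by rewrite -sum_nat_const; apply: leq_sum => c _; apply: deg_D.
Qed.
End NiceSetCover.

Section Reach.
Variables (V : finType) (h : rel V).

Lemma reach_le_mono n n' u v : n <= n' -> reach_le h n u v -> reach_le h n' u v.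
Proof.
elim: n n' u => [|n IH] [|n'] u //=; first by move=> _ ->.
move=> le_nn' /orP[->//|/existsP[w /andP[huw hwv]]].
by apply/orP; right; apply/existsP; exists w; rewrite huw (IH _ _ le_nn').
Qed.

Lemma reach_le_cat a b u w v :
  reach_le h a u w -> reach_le h b w v -> reach_le h (a + b) u v.
Proof.
elim: a u => [|a IH] u; first by move/eqP->.
move=> /orP[/eqP-> hwv|/existsP[x /andP[hux hxw]] hwv].
  by apply: reach_le_mono hwv; exact: leq_addl.
by rewrite addSn /=; apply/orP; right; apply/existsP; exists x; rewrite hux (IH _ hxw).
Qed.

Lemma reach_le_edge x y : h x y -> reach_le h 1 x y.
Proof. by move=> hxy; apply/orP; right; apply/existsP; exists y; rewrite hxy eqxx. Qed.

Lemma reach_le_connect (e : rel V) n u v :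
  (forall x y, h x y -> connect e x y) -> reach_le h n u v -> connect e u v.
Proof.
move=> he; elim: n u => [|n IH] u /=; first by move/eqP->.
move=> /orP[/eqP->//|/existsP[x /andP[hux hxv]]].
exact: connect_trans (he _ _ hux) (IH _ hxv).
Qed.

End Reach.

Lemma tc_connect (V : finType) (e : rel V) u v : tc e u v -> connect e u v.
Proof. by case/existsP=> w /andP[euw cwv]; apply: connect_trans (connect1 euw) cwv. Qed.

Lemma is_kTC_spannerP (V : finType) (k : nat) (e : rel V) (H : {set V * V}) :
  reflect ((forall p, p \in H -> tc e p.1 p.2) /\
           (forall u v, connect e u v -> reach_le (edge_rel H) k u v))
          (is_kTC_spanner k e H).
Proof.
apply: (iffP andP) => [[/forall_inP hH /forallP hr]|[hH hr]]; split.
- by [].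
- by move=> u v; move: (hr u) => /forallP /(_ v) /implyP.
- by apply/forall_inP.
- by apply/forallP => u; apply/forallP => v; apply/implyP; apply: hr.
Qed.

Section Butterfly.
Variable k' : nat.
Local Notation k := k'.+2.
Variables (m : nat) (A B : finType) (phi : BV k m -> A) (E : A -> B -> bool).
Local Notation V := (gvert k m B).
Local Notation e := (gedge phi E).

Definition layer (v : V) : nat := if v is inl p then p.1 else k.+1.

Definition in_B (v : V) : bool := if v is inr _ then true else false.

Definition src (u : BV k m) : V := inl (inord 0, u).

Definition agree (i j : nat) (x y : BV k m) : Prop :=
  forall c : 'I_k, (c < i) || (j <= c) -> x c = y c.

(* Necessary condition for v to be reachable from u in G: a butterfly vertex
   in layer i can only change coordinates >= i, and an edge to b must start
   from a vertex of A adjacent to b. *)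
Definition reach_cond (u v : V) : Prop :=
  match u, v with
  | inl (i, x), inl (j, y) => i <= j /\ agree i j x y
  | inl (i, x), inr b =>
      exists2 y : BV k m, (forall c : 'I_k, c < i -> x c = y c) & E (phi y) b
  | inr b, inr b' => b = b'
  | inr _, inl _ => False
  end.

Lemma reach_cond_refl u : reach_cond u u.
Proof. by case: u => [[i x]|b]. Qed.

Lemma reach_cond_step u w v : e u w -> reach_cond w v -> reach_cond u v.
Proof.
case: u => [[i x]|b] //; case: w => [[i' x']|b'] //=; last first.
  by case/andP=> _ hE; case: v => [[j y]|b''] //= <-; exists x.
case/andP=> /eqP ei' /forallP hx.
have same_x (c : 'I_k) : (c : nat) != i -> x c = x' c.
  by move=> hc; apply/eqP/(implyP (hx c)).
case: v => [[j y]|b''] /=.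
- move=> [le_i'j ag]; split; first by lia.
  move=> c hc; rewrite same_x; last by lia.
  by apply: ag; lia.
- case=> y hy hE; exists y => // c hc.
  by rewrite same_x; [apply: hy; lia | lia].
Qed.

Lemma connect_reach_cond u v : connect e u v -> reach_cond u v.
Proof.
case/connectP=> p pth ->{v}; elim: p u pth => [|w p IH] u /=.
  by move=> _; apply: reach_cond_refl.
by case/andP=> euw pth; apply: reach_cond_step euw (IH _ pth).
Qed.

Lemma edge_layer u v : e u v -> layer v = (layer u).+1.
Proof. by case: u => [[i x]|b]; case: v => [[j y]|b'] //= /andP[/eqP ->]. Qed.

Lemma reach_cond_layer u v : reach_cond u v -> layer u <= layer v.
Proof.
case: u => [[i x]|b]; case: v => [[j y]|b'] //=; first by case.
by move=> _; apply: ltnW; apply: ltn_ord.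
Qed.

Lemma tc_layer u v : tc e u v -> layer u < layer v.
Proof.
case/existsP=> w /andP[euw cwv]; rewrite -(edge_layer euw).
exact/reach_cond_layer/connect_reach_cond.
Qed.

Lemma butterfly_path (h : rel V) (hE : forall x y, e x y -> h x y) d i x y :
  i + d <= k -> agree i (i + d) x y ->
  reach_le h d (inl (inord i, x)) (inl (inord (i + d), y)).
Proof.
elim: d i x => [|d IH] i x le_idk ag.
  have -> : x = y by apply/ffunP => c; apply: ag; lia.
  by rewrite addn0 /= eqxx.
set x' := [ffun c : 'I_k => if (c : nat) == i then y c else x c].
apply/orP; right; apply/existsP; exists (inl (inord i.+1, x')); apply/andP; split.
  apply: hE => /=; rewrite !inordK ?eqxx /=; try lia.
  by apply/forallP => c; apply/implyP => hc; rewrite /x' ffunE (negbTE hc).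
rewrite -addSnnS; apply: IH; first by lia.
by move=> c hc; rewrite /x' ffunE; case: eqP => // ci; apply: ag; lia.
Qed.

Lemma src_connect_B u y b : E (phi y) b -> connect e (src u) (inr b).
Proof.
move=> hE; have to_y : connect e (src u) (inl (inord k, y)).
  apply: (@reach_le_connect _ e e k) => [x z|]; first exact: connect1.
  by apply: (butterfly_path (fun x z h => h) (i := 0)) => // c; have := ltn_ord c; lia.
by apply: connect_trans to_y (connect1 _); rewrite /= inordK // eqxx.
Qed.

Definition ancestors (v : V) : {set BV k m} := [set u | connect e (src u) v].

(* A vertex of layer i is reachable from at most m^i sources: they agree with it
   on the coordinates >= i. *)
Lemma card_ancestors (i : 'I_k.+1) x : #|ancestors (inl (i, x))| <= m ^ i.
Proof.
pose prefix (u : BV k m) : {ffun 'I_i -> 'I_m} :=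
  [ffun c : 'I_i => u (inord c)].
suff inj : {in ancestors (inl (i, x)) &, injective prefix}.
  by have := leq_card_in _ _ inj; rewrite card_ffun !card_ord.
move=> u1 u2; rewrite !inE => /connect_reach_cond [_ h1] /connect_reach_cond [_ h2] eq12.
apply/ffunP => c; case: (ltnP c i) => hc; last by rewrite h1 ?h2 // hc orbT.
have := congr1 (fun f : {ffun 'I_i -> 'I_m} => f (Ordinal hc)) eq12; rewrite !ffunE /=.
by rewrite inord_val.
Qed.

Definition prefix_class (j : nat) (y : BV k m) : {set BV k m} :=
  [set w : BV k m | [forall c : 'I_k, (c < j) ==> (w c == y c)]].

Lemma card_prefix_class j y : j <= k -> #|prefix_class j y| <= m ^ (k - j).
Proof.
move=> le_jk; pose suffix (w : BV k m) : {ffun 'I_(k - j) -> 'I_m} :=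
  [ffun c : 'I_(k - j) => w (inord (j + c))].
suff inj : {in prefix_class j y &, injective suffix}.
  by have := leq_card_in _ _ inj; rewrite card_ffun !card_ord.
move=> w1 w2; rewrite !inE => /forallP h1 /forallP h2 eq12.
apply/ffunP => c; case: (ltnP c j) => hc.
  by move: (h1 c) (h2 c); rewrite hc /= => /eqP-> /eqP->.
have hc' : c - j < k - j by have := ltn_ord c; lia.
have := congr1 (fun f : {ffun 'I_(k - j) -> 'I_m} => f (Ordinal hc')) eq12; rewrite !ffunE /=.
suff -> : inord (j + (c - j)) = c :> 'I_k by [].
by apply: val_inj; rewrite /= inordK; have := ltn_ord c; lia.
Qed.

End Butterfly.

Arguments src {k' m B} u.

Section LowerBound.
Variable k' : nat.
Local Notation k := k'.+2.
Variables (m : nat) (A B : finType) (phi : BV k m -> A) (E : A -> B -> bool).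
Local Notation V := (gvert k m B).
Local Notation e := (gedge phi E).
Variable H : {set V * V}.
Hypothesis spanner_tc : forall p, p \in H -> tc e p.1 p.2.
Hypothesis spanner_reach : forall u v, connect e u v -> reach_le (edge_rel H) k u v.
Hypothesis has_nbr : forall b, exists a, E a b.

Local Notation reached u v := (u \in ancestors phi E v).

Lemma spanner_connect n u v : reach_le (edge_rel H) n u v -> connect e u v.
Proof. by apply: reach_le_connect => x y /spanner_tc /tc_connect. Qed.

Lemma spanner_from_B n b v : reach_le (edge_rel H) n (inr b) v -> v = inr b.
Proof.
case: n => [/eqP //|n /orP[/eqP //|/existsP[w /andP[/spanner_tc]]]].
by case/existsP.
Qed.

Definition nbr (b : B) : A := xchoose (has_nbr b).

Lemma nbrP b : E (nbr b) b.
Proof. exact: xchooseP (has_nbr b). Qed.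

Definition long_edge (p : V * V) : bool :=
  [&& ~~ in_B p.1, ~~ in_B p.2 & layer p.1 + 2 <= layer p.2].

Definition below (v : V) : {set A} :=
  if v is inl (j, y) then phi @: prefix_class j y else set0.

Lemma card_below v : #|below v| <= m ^ (k - layer v).
Proof.
case: v => [[j y]|b] /=; last by rewrite cards0.
by rewrite (leq_trans (leq_imset_card _ _)) // card_prefix_class // -ltnS.
Qed.

Definition entered (u : BV k m) (P : pred nat) (b : B) : bool :=
  [exists y, ((y, inr b) \in H) && [&& ~~ in_B y, P (layer y) & reached u y]].

(* The set cover C_u = local_cover u extracted from H for the source u has three
   parts; the first consists of the vertices below the heads of the long edges
   of H whose tails are reached from u. *)
Definition cover_long u : {set A} :=
  \bigcup_(p in H | reached u p.1 && long_edge p) below p.2.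

Definition cover_low u : {set A} := nbr @: [set b | entered u (fun l => l <= k') b].

Variables (I : finType) (blk : B -> I).
Hypothesis nice : nice_blocks E blk.
Hypothesis phi_onto : forall a, exists y, phi y = a.

Definition full_blocks u : {set I} :=
  [set i | [forall b, (blk b == i) ==> entered u (pred1 k'.+1) b]].

Definition cover_full u : {set A} :=
  \bigcup_(i in full_blocks u)
    (if [pick b | blk b == i] is Some b then [set nbr b] else set0).

Definition local_cover u : {set A} := cover_long u :|: cover_low u :|: cover_full u.

Lemma spanner_path_cover u b n x :
  layer x + n <= k -> reached u x -> reach_le (edge_rel H) n x (inr b) ->
  [exists c in cover_long u :|: cover_low u, E c b] || entered u (pred1 k'.+1) b.
Proof.
elim: n x => [|n IH] [[i x]|b'] /= le_lk reach_x //; try by lia.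
case/existsP=> -[[j w]|b2] /andP[xw w_b]; rewrite /edge_rel in xw.
  have /= tc_xw := spanner_tc xw; have lt_ij := tc_layer tc_xw.
  case: (leqP (i + 2) j) => [long_xw|short_xw].
    have [y hy hE] := connect_reach_cond (spanner_connect w_b).
    apply/orP; left; apply/exists_inP; exists (phi y) => //.
    rewrite !inE; apply/orP; left; apply/bigcupP; exists (inl (i, x), inl (j, w)).
      by rewrite xw /= reach_x /long_edge /= long_xw.
    by apply: imset_f; rewrite inE; apply/forall_inP => c /hy ->.
  apply: IH w_b; first by rewrite /= in lt_ij *; lia.
  by move: reach_x; rewrite !inE => /connect_trans; apply; apply: tc_connect.
rewrite -(spanner_from_B w_b) in xw.
case: (leqP i k') => le_ik.
  apply/orP; left; apply/exists_inP; exists (nbr b); last exact: nbrP.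
  rewrite !inE; apply/orP; right; apply: imset_f; rewrite inE.
  by apply/existsP; exists (inl (i, x)); rewrite xw /= le_ik.
apply/orP; right; apply/existsP; exists (inl (i, x)); rewrite xw /= reach_x andbT.
by apply/eqP; lia.
Qed.

Lemma source_path_cover u b :
  [exists c in cover_long u :|: cover_low u, E c b] || entered u (pred1 k'.+1) b.
Proof.
apply: (@spanner_path_cover u b k (src u)); first by rewrite /= inordK.
  by rewrite inE connect0.
have [y phi_y] := phi_onto (nbr b).
by apply/spanner_reach/(@src_connect_B _ _ _ _ phi E u y); rewrite phi_y nbrP.
Qed.

(* A block with a vertex covered by cover_long u or cover_low u is covered by
   niceness; otherwise the block is full and covered by cover_full u. *)
Lemma local_cover_covers u : covers E (local_cover u).
Proof.
apply/forallP => b.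
case: (boolP [exists b',
    (blk b' == blk b) && [exists c in cover_long u :|: cover_low u, E c b']]).
  case/existsP => b' /andP[/eqP same_blk /exists_inP[c hc hE]].
  by apply/exists_inP; exists c; [rewrite inE hc | exact: nice hE same_blk].
move/existsPn => not_covered.
have full : blk b \in full_blocks u.
  rewrite inE; apply/forall_inP => b' /eqP same_blk.
  case/orP: (source_path_cover u b') => // cov_b'.
  by move: (not_covered b'); rewrite same_blk eqxx cov_b'.
have [b0 /eqP blk_b0 pick_b0] :
    exists2 b0, blk b0 == blk b & [pick b0 | blk b0 == blk b] = Some b0.
  by case: pickP => [b0 ? | none]; [exists b0 | move: (none b); rewrite eqxx].
apply/exists_inP; exists (nbr b0); last exact: nice (nbrP b0) blk_b0.
rewrite inE; apply/orP; right; apply/bigcupP; exists (blk b) => //.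
by rewrite pick_b0 inE.
Qed.

Hypothesis m_gt0 : 0 < m.

Lemma double_count (f : BV k m -> nat) (W : V * V -> nat) (M : nat) :
  (forall u, f u <= \sum_(p in H) (if reached u p.1 then W p else 0)) ->
  (forall p, W p * #|ancestors phi E p.1| <= M) ->
  \sum_u f u <= #|H| * M.
Proof.
move=> le_f le_W.
apply: (@leq_trans (\sum_u \sum_(p in H) (if reached u p.1 then W p else 0))).
  by apply: leq_sum => u _; apply: le_f.
rewrite exchange_big /= -sum_nat_const; apply: leq_sum => p _.
by rewrite -big_mkcond /= sum_nat_cond_const mulnC cardsE le_W.
Qed.

(* The weight of a long edge: the number of vertices below its head. *)
Definition long_weight (p : V * V) : nat :=
  if long_edge p then m ^ (k - layer p.2) else 0.

Lemma card_cover_long u :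
  #|cover_long u| <= \sum_(p in H) (if reached u p.1 then long_weight p else 0).
Proof.
apply: leq_trans (card_bigcup_le _ _) _.
rewrite big_mkcond [leqRHS]big_mkcond /=; apply: leq_sum => p _.
case: (p \in H) (reached u p.1) => [] [] //=; rewrite /long_weight.
by case: (long_edge p) => //; apply: card_below.
Qed.

(* A long edge into layer j has at most m^(k-j) vertices below it and its tail,
   of layer at most j-2, has at most m^(j-2) ancestors. *)
Lemma long_weight_bound p : long_weight p * #|ancestors phi E p.1| <= m ^ k'.
Proof.
case: p => [[[i x]|b] [[j y]|b']]; rewrite /long_weight /long_edge /= ?mul0n //.
case: ifP => long_ij; last by rewrite mul0n.
apply: leq_trans (leq_mul (leqnn _) (card_ancestors phi E i x)) _.
by rewrite -expnD leq_pexp2l //; have := ltn_ord j; lia.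
Qed.

Definition entry_edge (P : pred nat) (p : V * V) : bool :=
  [&& in_B p.2, ~~ in_B p.1 & P (layer p.1)].

(* Distinct entered vertices of B use distinct spanner edges. *)
Lemma card_entered u P :
  #|[set b | entered u P b]| <=
    \sum_(p in H) (if reached u p.1 then entry_edge P p : nat else 0).
Proof.
pose tail b := odflt (inr b)
  [pick y | ((y, inr b) \in H) && [&& ~~ in_B y, P (layer y) & reached u y]].
have inj : injective (fun b => (tail b, inr b) : V * V) by move=> b1 b2 [_ ->].
rewrite -(card_imset _ inj).
apply: (@leq_trans #|[set p in H | reached u p.1 && entry_edge P p]|).
  apply/subset_leq_card/subsetP => q /imsetP[b + ->]; rewrite inE => /existsP[y0 hy0].
  rewrite inE /tail; case: pickP => [y /andP[yH /and3P[By Py ry]]|/(_ y0)].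
    by rewrite yH /entry_edge /= By Py ry.
  by rewrite hy0.
rewrite card_sum_bool; apply: eq_leq; apply: eq_bigr => p _.
by case: (reached u p.1).
Qed.

Lemma entry_edge_bound (P : pred nat) j p :
  (forall l, P l -> l <= j) -> entry_edge P p * #|ancestors phi E p.1| <= m ^ j.
Proof.
move=> le_Pj; case: p => [[[i x]|b] v]; rewrite /entry_edge /= ?andbF ?mul0n //.
case: (in_B v) (boolP (P i)) => [] [Pi|_] /=; rewrite ?mul0n ?mul1n //.
by apply: leq_trans (card_ancestors phi E i x) _; rewrite leq_pexp2l // le_Pj.
Qed.

Variable s : nat.
Hypothesis blk_size : forall i, #|[set b | blk b == i]| = s.
Hypothesis le_ms : m <= s.

Lemma card_full_blocks u :
  s * #|full_blocks u| <= #|[set b | entered u (pred1 k'.+1) b]|.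
Proof.
rewrite -(card_preim_fibres _ blk_size); apply/subset_leq_card/subsetP => b.
by rewrite !inE => /forall_inP; apply.
Qed.

Lemma card_cover_full u : #|cover_full u| <= #|full_blocks u|.
Proof.
apply: leq_trans (card_bigcup_le _ _) _; rewrite -sum1_card; apply: leq_sum => i _.
by case: [pick _ | _] => [b|]; rewrite ?cards1 ?cards0.
Qed.

Lemma sum_local_cover : \sum_u #|local_cover u| <= 3 * (#|H| * m ^ k').
Proof.
have le_parts u : #|local_cover u| <= #|cover_long u| + #|cover_low u| + #|full_blocks u|.
  rewrite (leq_trans (leq_card_setU _ _).1) // leq_add ?card_cover_full //.
  exact: (leq_card_setU _ _).1.
apply: (@leq_trans (\sum_u (#|cover_long u| + #|cover_low u| + #|full_blocks u|))).
  by apply: leq_sum => u _; apply: le_parts.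
rewrite !big_split /= mulSn mul2n -addnn addnA.
apply: leq_add; first apply: leq_add.
- exact: double_count card_cover_long long_weight_bound.
- apply: double_count (fun u => leq_trans (leq_imset_card _ _) (card_entered u _)) _.
  by move=> p; apply: entry_edge_bound.
- have s_gt0 : 0 < s by apply: leq_trans le_ms.
  rewrite -(leq_pmul2l s_gt0) big_distrr /=.
  apply: leq_trans (double_count (M := m ^ k'.+1)
    (fun u => leq_trans (card_full_blocks u) (card_entered u _)) _) _.
    by move=> p; apply: entry_edge_bound => l /eqP ->.
  by rewrite expnSr mulnA mulnC leq_mul2r le_ms orbT.
Qed.

Lemma spanner_lower : m ^ 2 * opt_nsc E <= 3 * #|H|.
Proof.
have le_sum : \sum_(u : BV k m) opt_nsc E <= \sum_u #|local_cover u|.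
  by apply: leq_sum => u _; apply/min_card_le/local_cover_covers.
rewrite sum_nat_const card_ffun !card_ord in le_sum.
have m_pow_gt0 : 0 < m ^ k' by rewrite expn_gt0 m_gt0.
rewrite -(leq_pmul2l m_pow_gt0) mulnA -expnD addn2.
apply: leq_trans le_sum (leq_trans sum_local_cover _).
by rewrite [leqRHS]mulnC -mulnA.
Qed.

End LowerBound.

Section UpperBound.
Variable k' : nat.
Local Notation k := k'.+2.
Variables (m : nat) (A B : finType) (phi : BV k m -> A) (E : A -> B -> bool).
Local Notation V := (gvert k m B).
Local Notation e := (gedge phi E).
Variable C : {set A}.

Definition shortcuts : {set V * V} := [set p : V * V |
  match p with
  | (inl (i, w), inl (j, y)) =>
      [&& (i : nat) == k', (j : nat) == k, phi y \in C & w \in prefix_class k' y]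
  | _ => false
  end].

Definition graph_edges : {set V * V} := [set p | e p.1 p.2].

Definition cover_spanner : {set V * V} := graph_edges :|: shortcuts.

Local Notation h := (edge_rel cover_spanner).

Lemma graph_edge_spanner x y : e x y -> h x y.
Proof. by move=> exy; rewrite /edge_rel !inE /= exy. Qed.

(* A shortcut is realized by a butterfly path of length 2. *)
Lemma shortcut_tc p : p \in shortcuts -> tc e p.1 p.2.
Proof.
rewrite inE; case: p => [[[i w]|b] [[j y]|b']] //= /and4P[/eqP ik' /eqP jk _].
rewrite inE => /forallP pre_w.
have ag : agree k' (k' + 2) w y.
  move=> c /orP[c_lt|]; first by move/implyP: (pre_w c) => /(_ c_lt)/eqP.
  by have := ltn_ord c; lia.
have := butterfly_path (fun x z (exz : e x z) => exz) (eq_leq (addn2 k')) ag.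
have -> : inord k' = i by apply: val_inj; rewrite /= inordK ?ik' //; lia.
have -> : inord (k' + 2) = j by apply: val_inj; rewrite /= inordK addn2 ?jk.
case/orP => [/eqP[ij _]|/existsP[w1 /andP[w_w1 w1_y]]].
  by rewrite ij jk in ik'; lia.
apply/existsP; exists w1; rewrite w_w1 /=.
exact: (@reach_le_connect _ e e 1 _ _ (fun x z exz => connect1 exz) w1_y).
Qed.

Lemma cover_spanner_tc p : p \in cover_spanner -> tc e p.1 p.2.
Proof.
rewrite inE => /orP[|/shortcut_tc //]; rewrite inE => ep.
by apply/existsP; exists p.2; rewrite ep connect0.
Qed.

Lemma route_butterfly (i j : 'I_k.+1) x y :
  i <= j -> agree i j x y -> reach_le h k (inl (i, x)) (inl (j, y)).
Proof.
move=> le_ij ag; have le_jk : j <= k by rewrite -ltnS ltn_ord.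
have := butterfly_path graph_edge_spanner (d := j - i) (i := i) (x := x) (y := y).
rewrite subnKC // !inord_val => /(_ le_jk ag); apply: reach_le_mono.
by rewrite leq_subLR (leq_trans le_jk) ?leq_addl.
Qed.

Lemma route_to_B (i : 'I_k.+1) (x y : BV k m) (b : B) :
  0 < i -> (forall c : 'I_k, c < i -> x c = y c) -> E (phi y) b ->
  reach_le h k (inl (i, x)) (inr b).
Proof.
move=> i_gt0 pre_xy hE; have le_ik : i <= k by rewrite -ltnS ltn_ord.
have ag : agree i (i + (k - i)) x y.
  by move=> c /orP[/pre_xy //|]; have := ltn_ord c; lia.
have := butterfly_path graph_edge_spanner (eq_leq (subnKC le_ik)) ag.
rewrite subnKC // inord_val => to_y.
have last_edge : reach_le h 1 (inl (inord k, y)) (inr b).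
  by apply/reach_le_edge/graph_edge_spanner; rewrite /= inordK // eqxx.
by apply: reach_le_mono (reach_le_cat to_y last_edge); lia.
Qed.

Variable psi : A -> BV k m.
Hypothesis psiK : cancel psi phi.
Hypothesis C_covers : covers E C.

(* From the first layer, go to the copy w of a cover vertex c of b in layer k-2,
   take the shortcut to c and then the edge to b. *)
Lemma route_via_cover x b : reach_le h k (src x) (inr b).
Proof.
have [c Cc hE] := exists_inP (forallP C_covers b).
pose w : BV k m := [ffun i : 'I_k => if i < k' then psi c i else x i].
have to_w : reach_le h k' (src x) (inl (inord k', w)).
  apply: (butterfly_path graph_edge_spanner (i := 0)) => [|i]; first by rewrite add0n ltnW.
  by rewrite /w ffunE add0n /= leqNgt => /negbTE ->.
have shortcut : reach_le h 1 (inl (inord k', w)) (inl (inord k, psi c)).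
  apply/reach_le_edge; rewrite /edge_rel in_setU; apply/orP; right.
  rewrite inE /= !inordK //; last by lia.
  rewrite psiK Cc !eqxx inE /=.
  by apply/forall_inP => i lt_ik'; rewrite /w ffunE lt_ik'.
have last_edge : reach_le h 1 (inl (inord k, psi c)) (inr b).
  by apply/reach_le_edge/graph_edge_spanner; rewrite /= inordK // eqxx psiK.
by have := reach_le_cat (reach_le_cat to_w shortcut) last_edge; rewrite !addn1.
Qed.

Lemma cover_spanner_is_spanner : is_kTC_spanner k e cover_spanner.
Proof.
apply/is_kTC_spannerP; split=> [|u v]; first exact: cover_spanner_tc.
move/connect_reach_cond; case: u => [[i x]|b]; case: v => [[j y]|b'] //=.
- by case; apply: route_butterfly.
- case=> y pre_xy hE; case: (posnP i) => [i0|i_gt0]; last exact: route_to_B pre_xy hE.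
  have -> : i = inord 0 by apply: val_inj; rewrite /= inordK.
  exact: route_via_cover.
- by move=> ->; rewrite /= eqxx.
Qed.

Hypothesis phiK : cancel phi psi.

(* A butterfly edge is determined by its layer, its tail and the new value of
   the coordinate it changes; the other edges of G are the pairs of E. *)
Lemma card_graph_edges :
  #|graph_edges| <= k * m ^ k * m + #|[set q : A * B | E q.1 q.2]|.
Proof.
pose bfly (t : 'I_k * BV k m * 'I_m) : V * V := let: (i, x, a) := t in
  (inl (inord i, x), inl (inord i.+1, [ffun c => if c == i then a else x c])).
pose adj (q : A * B) : V * V := (inl (inord k, psi q.1), inr q.2).
have sub : graph_edges \subset bfly @: setT :|: adj @: [set q : A * B | E q.1 q.2].
  apply/subsetP => -[[[i x]|b] [[j y]|b']]; rewrite !inE //=.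
    case/andP => /eqP ji /forallP same_xy; have lt_ik : i < k by rewrite -ltnS -ji.
    apply/orP; left; apply/imsetP; exists (Ordinal lt_ik, x, y (Ordinal lt_ik)) => /=.
      by rewrite inE.
    rewrite inord_val; congr (_, inl (_, _)).
      by apply: val_inj; rewrite /= inordK // -ji.
    apply/ffunP => c; rewrite ffunE; case: eqP => [->//|ne_ci].
    have c_ne : (c : nat) != i by apply/eqP => ci; apply: ne_ci; apply: val_inj.
    by move/implyP: (same_xy c) => /(_ c_ne)/eqP ->.
  case/andP => /eqP ik Exb; apply/orP; right; apply/imsetP; exists (phi x, b') => //=.
    by rewrite inE.
  by rewrite /adj /= phiK; congr (inl (_, _), _); apply: val_inj; rewrite /= inordK ?ik.
apply: leq_trans (subset_leq_card sub) _; apply: leq_trans (leq_card_setU _ _).1 _.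
rewrite leq_add ?leq_imset_card // (leq_trans (leq_imset_card _ _)) //.
by rewrite cardsT !card_prod card_ffun !card_ord.
Qed.

(* A shortcut is determined by its head, taken in psi @: C, and its tail, which
   shares all but the last two coordinates of the head. *)
Lemma card_shortcuts : #|shortcuts| <= #|C| * m ^ 2.
Proof.
have sub : shortcuts \subset \bigcup_(y in psi @: C)
    [set (inl (inord k', w), inl (inord k, y)) | w in prefix_class k' y].
  apply/subsetP => -[[[i w]|b] [[j y]|b']]; rewrite inE //=.
  case/and4P => /eqP ik' /eqP jk Cy pre_w.
  apply/bigcupP; exists y; first by apply/imsetP; exists (phi y); rewrite ?phiK.
  apply/imsetP; exists w => //; congr (inl (_, _), inl (_, _)).
    by apply: val_inj; rewrite /= inordK ?ik' //; apply: leqW (leqW (leqnn _)).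
  by apply: val_inj; rewrite /= inordK ?jk.
apply: leq_trans (subset_leq_card sub) _; apply: leq_trans (card_bigcup_le _ _) _.
apply: leq_trans (_ : \sum_(y in psi @: C) m ^ 2 <= _).
  apply: leq_sum => y _; apply: leq_trans (leq_imset_card _ _) _.
  have k_sub : k - k' = 2 by rewrite -addn2 addKn.
  by have := card_prefix_class y (leqW (leqW (leqnn k'))); rewrite k_sub.
by rewrite sum_nat_const leq_mul2r leq_imset_card orbT.
Qed.

End UpperBound.

Lemma S_k_upper k' m (A B I : finType) (phi : BV k'.+2 m -> A) (E : A -> B -> bool)
    (blk : B -> I) (s D : nat) (C : {set A}) :
  bijective phi -> (forall i, #|[set b | blk b == i]| = s) -> 0 < s ->
  (forall a, nblocks E blk a <= D) -> covers E C ->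
  m ^ k'.+2 <= #|I| -> D <= m -> D * D * s <= m ^ 2 ->
  S_k k'.+2 (gedge phi E) <= k'.+4 * #|C| * m ^ 2.
Proof.
move=> phi_bij blk_size s_gt0 deg_D C_covers le_I le_Dm le_DDs.
have [psi phiK psiK] := phi_bij.
have card_A : #|A| = m ^ k'.+2 by rewrite -(bij_eq_card phi_bij) card_ffun !card_ord.
have le_AC : m ^ k'.+2 <= #|C| * D.
  exact: leq_trans le_I (card_blocks_le_cover blk_size s_gt0 C_covers deg_D).
have butterfly_le : m ^ k'.+2 * m <= #|C| * m ^ 2.
  rewrite (leq_trans (leq_mul le_AC (leqnn m))) // -mulnA leq_mul2l.
  by rewrite -mulnn leq_mul2r le_Dm !orbT.
have pairs_le : #|A| * (D * s) <= #|C| * m ^ 2.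
  rewrite card_A (leq_trans (leq_mul le_AC (leqnn _))) //.
  by rewrite -mulnA leq_mul2l mulnA le_DDs orbT.
rewrite /S_k; apply: leq_trans (min_card_le (cover_spanner_is_spanner psiK C_covers)) _.
apply: leq_trans (leq_card_setU _ _).1 _.
have := card_graph_edges E phiK; have := card_adjacent_pairs blk_size deg_D.
have := card_shortcuts B C phiK; have := leq_mul (leqnn k'.+2) butterfly_le.
nia.
Qed.

Lemma max_degree (A B I : finType) (E : A -> B -> bool) (blk : B -> I) (k m : nat) :
  0 < k -> (forall a, nblocks E blk a ^ (5 * k) <= m ^ k) ->
  exists2 D, (forall a, nblocks E blk a <= D) & D ^ 5 <= m.
Proof.
move=> k_gt0 deg; exists (\max_a nblocks E blk a) => [a|]; first exact: leq_bigmax.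
elim/big_ind: _ => // [x y x5 y5|a _]; first by rewrite /maxn; case: ltnP.
by move: (deg a); rewrite expnM leq_exp2r.
Qed.

Lemma nice_parameters (k m s D : nat) :
  0 < k -> 0 < m -> s ^ (2 * k) = (m ^ k) ^ 3 -> D ^ 5 <= m ->
  [/\ m <= s, D <= m & D * D * s <= m ^ 2].
Proof.
move=> k_gt0 m_gt0 hs D5.
have s2 : s ^ 2 = m ^ 3 by apply: (@expIn k) => //; rewrite -expnM hs -!expnM mulnC.
have le_ms : m <= s by rewrite -(@leq_exp2r _ _ 2) // s2 leq_pexp2l.
have le_D4 : D ^ 4 <= m.
  by case: (posnP D) => [->|D_gt0]; rewrite ?exp0n // (leq_trans _ D5) // leq_pexp2l.
split=> //.
  by case: (posnP D) => [->|D_gt0] //; rewrite (leq_trans _ le_D4) // -{1}[D]expn1 leq_pexp2l.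
rewrite -(@leq_exp2r _ _ 2) // !expnMn s2 -!expnD.
by rewrite (_ : m ^ (2 + 2) = m * m ^ 3) -?expnS // leq_mul.
Qed.

Import Order.TTheory GRing.Theory Num.Theory.
Local Open Scope ring_scope.

Theorem mainTheorem10 (k : nat) (hk : (2 <= k)%N) :
  exists (c1 c2 : rat), 0 < c1 /\ 0 < c2 /\
  exists N : nat,
  forall (m s : nat) (A B : finType) (phi : BV k m -> A)
    (E : A -> B -> bool) (blk : B -> 'I_(m ^ k)),
    (N <= m ^ k)%N ->
    bijective phi ->
    (* block size b'/a' = n^{3/(2k)} with n = m^k *)
    (s ^ (2 * k) = (m ^ k) ^ 3)%N ->
    (forall i : 'I_(m ^ k), #|[set b | blk b == i]| = s) ->
    nice_blocks E blk ->
    (* each v in A adjacent to at most n^{1/(5k)} blocks *)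
    (forall v : A, (nblocks E blk v ^ (5 * k) <= m ^ k)%N) ->
    (forall b : B, exists v : A, E v b) ->
    c1 * (opt_nsc E)%:R * (m ^ 2)%:R <= (S_k k (gedge phi E))%:R /\
    (S_k k (gedge phi E))%:R <= c2 * (opt_nsc E)%:R * (m ^ 2)%:R.
Proof.
case: k hk => [|[|k']] // _.
exists 3%:R^-1, k'.+4%:R; split; first by rewrite invr_gt0 ltr0n.
split; first by rewrite ltr0n.
exists 1%N => m s A B phi E blk n_gt0 phi_bij hs blk_size nice deg has_nbr.
have m_gt0 : (0 < m)%N by move: n_gt0; rewrite expn_gt0 orbF.
have [D deg_D D5] := max_degree (isT : (0 < k'.+2)%N) deg.
have [le_ms le_Dm le_DDs] := nice_parameters (isT : (0 < k'.+2)%N) m_gt0 hs D5.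
have [psi phiK psiK] := phi_bij.
have [C C_covers optC] : exists2 C, covers E C & opt_nsc E = #|C|.
  apply: (@min_card_attained _ _ setT); apply/forallP => b.
  by have [a Eab] := has_nbr b; apply/exists_inP; exists a; rewrite ?inE.
have [H /is_kTC_spannerP[H_tc H_reach] SkH] :=
  min_card_attained (cover_spanner_is_spanner psiK C_covers).
have upper := S_k_upper phi_bij blk_size (leq_trans m_gt0 le_ms) deg_D C_covers
  (eq_leq (esym (card_ord _))) le_Dm le_DDs.
have lower := spanner_lower H_tc H_reach has_nbr nice
  (fun a => ex_intro _ (psi a) (psiK a)) m_gt0 blk_size le_ms.
split; last by rewrite -!natrM ler_nat optC.
by rewrite -mulrA -natrM mulrC ler_pdivrMr ?ltr0n // mulrC -natrM ler_nat mulnC /S_k SkH.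
Qed.
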